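(* Let $n\ge 3$. The map $\phi_n:|\mathcal K_n|\to\partial(Root_n)$ is injective. Equivalently, if $\mathcal T_1,\mathcal T_2$ are nonempty admissible families and there exist positive reals $\{\alpha_{ij}\}_{[i,j)\in\mathcal T_1}$, $\{\beta_{ij}\}_{[i,j)\in\mathcal T_2}$ with $\sum\alpha_{ij}=1=\sum\beta_{ij}$ and $\sum_{[i,j)\in\mathcal T_1}\alpha_{ij}(e_i-e_j)=\sum_{[i,j)\in\mathcal T_2}\beta_{ij}(e_i-e_j)$, then $\mathcal T_1=\mathcal T_2$ and $\alpha_{ij}=\beta_{ij}$ for all $[i,j)\in\mathcal T_1$.
   Context: Identify $[n]$ with the vertices of a regular $n$-gon in $S^1$, labelled counterclockwise, with counterclockwise order $\preceq$; for $a\ne b\in[n]$, $[a,b)=\{z\in S^1:a\preceq z\prec b\}$. A finite collection of such arcs is admissible if any two distinct members $I,J$ are either intersecting and strictly nested, or disjoint with the sink of neither equal to the source of the other. $\mathcal K_n$ is the simplicial complex on the arcs $[i,j)$, $i\neq j$, whose simplices are the nonempty admissible families. $Root_n=\mathrm{Conv}\{e_i-e_j:i\ne j\}$ and $\phi_n$ is affine on each simplex of $\mathcal K_n$ with $\phi_n([i,j))=e_i-e_j$. *)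

From HB Require Import structures.
From mathcomp Require Import all_boot all_order all_algebra.
Set Implicit Arguments. Unset Strict Implicit. Unset Printing Implicit Defensive.
Import Order.TTheory GRing.Theory Num.Theory.

(* Vertices of the regular n-gon: 'I_n, labelled counterclockwise.
   An arc [a,b) is represented by the pair (a,b) with a != b;
   a is its source and b its sink. *)
Definition garc n := ('I_n * 'I_n)%type.

Definition is_arc n (a : garc n) : bool := a.1 != a.2.

Definition ccw n (i k : 'I_n) : nat := ((k + n - i) %% n)%N.

Definition arc_mem n (a : garc n) (k : 'I_n) : bool := (ccw a.1 k < ccw a.1 a.2)%N.

(* vertex set of the arc; the continuous half-open arc [a,b) in S^1 is the
   union of the half-open unit segments [v, v+1) over its vertices v, so
   intersection/inclusion of arcs coincide with those of the vertex sets. *)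
Definition arc_set n (a : garc n) : {set 'I_n} := [set k | arc_mem a k].

Definition admissible_pair n (I J : garc n) : bool :=
  ((arc_set I :&: arc_set J != set0) &&
     ((arc_set I \proper arc_set J) || (arc_set J \proper arc_set I)))
  || [&& [disjoint arc_set I & arc_set J], I.2 != J.1 & J.2 != I.1].

Definition admissible n (T : {set garc n}) : bool :=
  [forall I in T, forall J in T, (I != J) ==> admissible_pair I J].

Definition simplexK n (T : {set garc n}) : bool :=
  [&& T != set0, [forall a in T, is_arc a] & admissible T].

Local Open Scope ring_scope.

Definition eroot (R : nzRingType) n (a : garc n) : 'rV[R]_n :=
  \row_k ((k == a.1)%:R - (k == a.2)%:R).

From HB Require Import structures.
From mathcomp Require Import all_boot all_order all_algebra zify lra.
Import Order.TTheory GRing.Theory Num.Theory.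
Set Implicit Arguments. Unset Strict Implicit. Unset Printing Implicit Defensive.

(* The k-th coordinate of sum_a w_a (e_{a.1} - e_{a.2}) is c(k) - c(k-1), where
   the coverage c(k) is the total weight of the arcs containing vertex k.  Two
   families with the same image therefore have coverages differing by a
   constant.  By admissibility no arc contains the sink of an arc of maximal
   length, so each family leaves some vertex uncovered; the constant is then
   both >= 0 and <= 0, and the two coverages agree.  Equal coverages determine
   the weighted family: around an arc a of maximal length the coverage vanishes
   just before a.1 and at a.2, which forces a to belong to both families, with
   the same weight; removing it, we conclude by induction. *)

Section Arcs.
Variable n : nat.
Implicit Types (i k : 'I_n) (a c d e : garc n) (T : {set garc n}).

Lemma ccwE i k : ccw i k = if (i <= k)%N then (k - i)%N else (k + n - i)%N.
Proof.
rewrite /ccw; have := ltn_ord k; have := ltn_ord i; case: (leqP i k) => h hi hk.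
  have -> : (k + n - i = (k - i) + n)%N by lia.
  by rewrite modnDr modn_small //; lia.
by rewrite modn_small //; lia.
Qed.

Lemma ord_predE k : (ord_pred k : nat) = if k == 0%N :> nat then (n - 1)%N else (k - 1)%N.
Proof.
rewrite /ord_pred /=; have := ltn_ord k; case: eqP => h hk.
  by rewrite h add0n modn_small //; lia.
have -> : ((k + n).-1 = (k - 1) + n)%N by lia.
by rewrite modnDr modn_small //; lia.
Qed.

Ltac arc_lia := rewrite /arc_mem ?ccwE ?ord_predE /=;
  repeat match goal with |- context [if ?b then _ else _] =>
    lazymatch b with context [if _ then _ else _] => fail | _ => case: ifPn end end;
  move=> *; lia.

Ltac case_arc c := let i := fresh "i" in let j := fresh "j" in
  case: c => i j; have := ltn_ord i; have := ltn_ord j;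
  rewrite /is_arc /= -(inj_eq val_inj) /=.

Lemma arc_mem_source c : is_arc c -> arc_mem c c.1.
Proof. case_arc c; arc_lia. Qed.

Lemma arc_mem_sinkF c : is_arc c -> ~~ arc_mem c c.2.
Proof. case_arc c; arc_lia. Qed.

Lemma arc_mem_pred_sink c : is_arc c -> arc_mem c (ord_pred c.2).
Proof. case_arc c; arc_lia. Qed.

Lemma arc_mem_pred_sourceF c : is_arc c -> ~~ arc_mem c (ord_pred c.1).
Proof. case_arc c; arc_lia. Qed.

Lemma arc_entry e k : is_arc e -> arc_mem e k -> ~~ arc_mem e (ord_pred k) -> k = e.1.
Proof.
move=> ae ki kp; apply: val_inj; move: ae ki kp.
by have := ltn_ord k; case_arc e; arc_lia.
Qed.

Lemma arc_exit e k : is_arc e -> arc_mem e (ord_pred k) -> ~~ arc_mem e k -> k = e.2.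
Proof.
move=> ae ki kp; apply: val_inj; move: ae ki kp.
by have := ltn_ord k; case_arc e; arc_lia.
Qed.

Lemma arc_mem_pred e k : is_arc e ->
  ((k == e.1) + arc_mem e (ord_pred k) = arc_mem e k + (k == e.2))%N.
Proof. have := ltn_ord k; case_arc e; rewrite -!(inj_eq val_inj) /=; arc_lia. Qed.

Lemma ccw_inj i : injective (ccw i).
Proof.
move=> x y hxy; apply: val_inj; move: hxy.
have := ltn_ord i; have := ltn_ord x; have := ltn_ord y; arc_lia.
Qed.

Lemma eq_arc_same_source a d :
  a.1 = d.1 -> ~~ arc_mem d a.2 -> ~~ arc_mem a d.2 -> a = d.
Proof.
move=> e1; rewrite /arc_mem -e1 -!leqNgt => le_da le_ad.
have e2 : a.2 = d.2 by apply: (@ccw_inj a.1); apply/eqP; rewrite eqn_leq le_ad.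
by rewrite [a]surjective_pairing [d]surjective_pairing e1 e2.
Qed.

Lemma admissibleP T c e : admissible T -> c \in T -> e \in T -> c != e ->
  admissible_pair c e.
Proof.
move=> /forall_inP/(_ c) hT hc he.
by move: (hT hc) => /forall_inP/(_ e he)/implyP.
Qed.

Lemma admissibleS T T' : T' \subset T -> admissible T -> admissible T'.
Proof.
move=> /subsetP sub hT; apply/forall_inP => c hc; apply/forall_inP => e he.
exact/implyP/(admissibleP hT (sub _ hc) (sub _ he)).
Qed.

(* Nesting can only go this way since [c] misses [c.2]; disjointness would make
   [e] start at [c.2].  Symmetrically for [ord_pred c.1] below. *)
Lemma admissible_sink_proper T c e : admissible T -> c \in T -> e \in T ->
  is_arc c -> is_arc e -> arc_mem e c.2 -> arc_set c \proper arc_set e.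
Proof.
move=> hT hc he ac ae hm.
have ne : c != e by apply: contraTneq hm => <-; exact: arc_mem_sinkF.
case/orP: (admissibleP hT hc he ne) => [/andP [_ /orP[] //] | /and3P [hd h1 _]].
  move=> /proper_sub /subsetP /(_ c.2).
  by rewrite !inE hm (negbTE (arc_mem_sinkF ac)) => /(_ isT).
have hp : ord_pred c.2 \in arc_set c by rewrite inE arc_mem_pred_sink.
have := disjointFr hd hp; rewrite inE => /negbT hn.
by move: h1; rewrite (arc_entry ae hm hn) eqxx.
Qed.

Lemma admissible_pred_source_proper T c e : admissible T -> c \in T -> e \in T ->
  is_arc c -> is_arc e -> arc_mem e (ord_pred c.1) -> arc_set c \proper arc_set e.
Proof.
move=> hT hc he ac ae hm.
have ne : c != e by apply: contraTneq hm => <-; exact: arc_mem_pred_sourceF.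
case/orP: (admissibleP hT hc he ne) => [/andP [_ /orP[] //] | /and3P [hd _ h2]].
  move=> /proper_sub /subsetP /(_ (ord_pred c.1)).
  by rewrite !inE hm (negbTE (arc_mem_pred_sourceF ac)) => /(_ isT).
have hp : c.1 \in arc_set c by rewrite inE arc_mem_source.
have := disjointFr hd hp; rewrite inE => /negbT hn.
by move: h2; rewrite -(arc_exit ae hm hn) eqxx.
Qed.

Lemma admissible_uncovered T : (0 < n)%N -> admissible T -> {in T, forall e, is_arc e} ->
  exists k, {in T, forall e, ~~ arc_mem e k}.
Proof.
move=> n_gt0 hT ar; have [-> | [c0 hc0]] := set_0Vmem T.
  by exists (Ordinal n_gt0) => e; rewrite inE.
have [c hc cmax] := @arg_maxnP _ c0 (mem T) (fun c => #|arc_set c|) hc0.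
exists c.2 => e he; apply/negP => hm.
have /proper_card := admissible_sink_proper hT hc he (ar _ hc) (ar _ he) hm.
by have := cmax e he; lia.
Qed.

Lemma ord_pred_invariant_const (V : Type) (f : 'I_n -> V) :
  (forall k, f (ord_pred k) = f k) -> forall k j, f k = f j.
Proof.
move=> fP; case: n f fP => [|m] f fP; first by case.
have f0 p (hp : (p < m.+1)%N) : f (Ordinal hp) = f ord0.
  elim: p hp => [|p IHp] hp; first exact/congr1/val_inj.
  rewrite -fP -(IHp (ltnW hp)); congr f; apply: val_inj.
  by rewrite /= modnDr modn_small // ltnW.
by move=> [k hk] [j hj]; rewrite !f0.
Qed.

Section Coverage.
Variable R : realFieldType.
Local Open Scope ring_scope.
Implicit Types (w alpha beta : garc n -> R) (x : R).

Definition coverage T w k : R := \sum_(e in T) w e * (arc_mem e k)%:R.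

Definition pos_admissible T w :=
  [/\ admissible T, {in T, forall e, is_arc e} & {in T, forall e, 0 < w e}].

Lemma sum_eroot_coverage T w k : {in T, forall e, is_arc e} ->
  (\sum_(a in T) w a *: eroot R a) 0 k = coverage T w k - coverage T w (ord_pred k).
Proof.
move=> ar; rewrite summxE /coverage -sumrB; apply: eq_bigr => e he.
rewrite !mxE -mulrBr; congr (_ * _).
by have := congr1 (fun m => m%:R : R) (arc_mem_pred k (ar _ he)); rewrite !natrD; lra.
Qed.

Lemma coverage_ge0 T w k : {in T, forall e, 0 < w e} -> 0 <= coverage T w k.
Proof. by move=> pos; apply: sumr_ge0 => e he; rewrite mulr_ge0 ?ler0n ?ltW ?pos. Qed.

Lemma coverage_eq0 T w k : {in T, forall e, ~~ arc_mem e k} -> coverage T w k = 0.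
Proof. by move=> h; apply: big1 => e /h/negbTE ->; rewrite mulr0. Qed.

Lemma coverageD1 T w a k : a \in T ->
  coverage T w k = coverage (T :\ a) w k + w a * (arc_mem a k)%:R.
Proof.
move=> ha; rewrite /coverage (bigD1 a) //= addrC; congr (_ + _).
by apply: eq_bigl => e; rewrite in_setD1 andbC.
Qed.

Lemma coverage_gt0 T w e k : {in T, forall e, 0 < w e} -> e \in T -> arc_mem e k ->
  0 < coverage T w k.
Proof.
move=> pos he hm; rewrite (coverageD1 _ _ he) hm mulr1 ltr_wpDl ?pos //.
by apply: coverage_ge0 => x /setD1P [_ /pos].
Qed.

Lemma coverage_eq0_arc_memF T w c k : {in T, forall e, 0 < w e} -> c \in T ->
  coverage T w k = 0 -> ~~ arc_mem c k.
Proof. by move=> pos hc z; apply/negP => /(coverage_gt0 pos hc); rewrite z ltxx. Qed.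

Lemma coverage_gt0P T w k : 0 < coverage T w k -> exists2 e, e \in T & arc_mem e k.
Proof.
case: (boolP [exists e in T, arc_mem e k]) => [/exists_inP [e] | none]; first by exists e.
rewrite coverage_eq0 ?ltxx // => e he; apply: contraNN none => hm.
by apply/exists_inP; exists e.
Qed.

Definition lower_weight w a x : garc n -> R := fun e => w e - (e == a)%:R * x.

Lemma coverage_lower_weight T w a x k : a \in T ->
  coverage T (lower_weight w a x) k = coverage T w k - x * (arc_mem a k)%:R.
Proof.
move=> ha; rewrite /coverage /lower_weight.
under eq_bigr do rewrite mulrBl; rewrite sumrB; congr (_ - _).
rewrite (bigD1 a) //= eqxx mul1r.
by rewrite big1 ?addr0 // => e /andP [_ /negbTE ->]; rewrite !mul0r.
Qed.

Lemma pos_admissibleD1 T w a : pos_admissible T w -> pos_admissible (T :\ a) w.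
Proof.
case=> hT ar pos; split; first exact: admissibleS (subD1set T a) hT.
- by move=> e /setD1P [_ /ar].
- by move=> e /setD1P [_ /pos].
Qed.

Lemma pos_admissible_lower_weight T w a x : pos_admissible T w -> x < w a ->
  pos_admissible T (lower_weight w a x).
Proof.
case=> hT ar pos hx; split => // e he; rewrite /lower_weight.
case: eqP => [-> | _]; first by rewrite mul1r subr_gt0.
by rewrite mul0r subr0 pos.
Qed.

Lemma coverage_not_proper_sink T w c : pos_admissible T w -> c \in T ->
  {in T, forall e, ~~ (arc_set c \proper arc_set e)} -> coverage T w c.2 = 0.
Proof.
case=> hT ar _ hc cmax; apply: coverage_eq0 => e he; apply: contraNN (cmax _ he).
exact: admissible_sink_proper hT hc he (ar _ hc) (ar _ he).
Qed.

Lemma coverage_not_proper_pred_source T w c : pos_admissible T w -> c \in T ->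
  {in T, forall e, ~~ (arc_set c \proper arc_set e)} -> coverage T w (ord_pred c.1) = 0.
Proof.
case=> hT ar _ hc cmax; apply: coverage_eq0 => e he; apply: contraNN (cmax _ he).
exact: admissible_pred_source_proper hT hc he (ar _ hc) (ar _ he).
Qed.

(* [d] is a longest arc of [T2] through [a.1]; comparing the zeros of the common
   coverage around [a] and around [d] shows that [d] starts and ends where [a] does. *)
Lemma longest_arc_mem T1 T2 alpha beta a :
  pos_admissible T1 alpha -> pos_admissible T2 beta ->
  coverage T1 alpha =1 coverage T2 beta -> a \in T1 ->
  {in T1, forall e, #|arc_set e| <= #|arc_set a|}%N -> a \in T2.
Proof.
move=> g1 g2 covE ha amax; have [_ ar1 pos1] := g1; have [_ ar2 pos2] := g2.
have a_max : {in T1, forall e, ~~ (arc_set a \proper arc_set e)}.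
  by move=> e he; apply/negP => /proper_card; rewrite ltnNge amax.
have [d0 hd0 hd0a] : exists2 d, d \in T2 & arc_mem d a.1.
  apply: (@coverage_gt0P T2 beta).
  by rewrite -covE (coverage_gt0 pos1 ha) ?arc_mem_source ?ar1.
pose P := [pred d | (d \in T2) && arc_mem d a.1].
have [d /andP [hd hda] dmax] :=
  @arg_maxnP _ d0 P (fun d => #|arc_set d|) (introT andP (conj hd0 hd0a)).
have d_max : {in T2, forall e, ~~ (arc_set d \proper arc_set e)}.
  move=> e he; apply/negP => hp.
  have ea : arc_mem e a.1 by move: hp => /proper_sub /subsetP /(_ a.1); rewrite !inE; apply.
  by have /proper_card := hp; have := dmax e; rewrite /= he ea => /(_ isT); lia.
suff -> : a = d by []; apply: eq_arc_same_source.
- apply: arc_entry hda _; first exact: ar2.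
  by apply: coverage_eq0_arc_memF pos2 hd _; rewrite -covE coverage_not_proper_pred_source.
- by apply: coverage_eq0_arc_memF pos2 hd _; rewrite -covE coverage_not_proper_sink.
- by apply: coverage_eq0_arc_memF pos1 ha _; rewrite covE coverage_not_proper_sink.
Qed.

Lemma longest_arc_memI T1 T2 alpha beta a :
  pos_admissible T1 alpha -> pos_admissible T2 beta ->
  coverage T1 alpha =1 coverage T2 beta -> a \in T1 :|: T2 ->
  {in T1 :|: T2, forall e, #|arc_set e| <= #|arc_set a|}%N -> a \in T1 :&: T2.
Proof.
move=> g1 g2 covE ha amax; apply/setIP.
have amax1 : {in T1, forall e, #|arc_set e| <= #|arc_set a|}%N.
  by move=> e he; apply/amax/setUP; left.
have amax2 : {in T2, forall e, #|arc_set e| <= #|arc_set a|}%N.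
  by move=> e he; apply/amax/setUP; right.
case/setUP: ha => h; first by split; last exact: (longest_arc_mem g1 g2 covE).
by split; first exact: (longest_arc_mem g2 g1 (fsym covE)).
Qed.

Lemma coverage_inj_size N T1 T2 alpha beta : (#|T1| + #|T2| <= N)%N ->
  pos_admissible T1 alpha -> pos_admissible T2 beta ->
  coverage T1 alpha =1 coverage T2 beta ->
  T1 = T2 /\ {in T1, alpha =1 beta}.
Proof.
elim: N T1 T2 alpha beta => [|N IH] T1 T2 alpha beta hN g1 g2 covE.
  have /cards0_eq -> : #|T1| = 0%N by lia.
  have /cards0_eq -> : #|T2| = 0%N by lia.
  by split => // e; rewrite inE.
have [/eqP | [a0 ha0]] := set_0Vmem (T1 :|: T2).
  by rewrite setU_eq0 => /andP [/eqP -> /eqP ->]; split => // e; rewrite inE.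
have [a ha amax] := @arg_maxnP _ a0 (mem (T1 :|: T2)) (fun e => #|arc_set e|) ha0.
have /setIP [ha1 ha2] := longest_arc_memI g1 g2 covE ha amax.
(* If [a] weighs less in [T1], lowering its weight in [T2] by that amount and
   removing it from [T1] keeps the coverages equal, so [T1 :\ a = T2] by induction. *)
have weight_ltF T T' w w' : (#|T| + #|T'| <= N.+1)%N -> pos_admissible T w ->
    pos_admissible T' w' -> coverage T w =1 coverage T' w' -> a \in T -> a \in T' ->
    ~ w a < w' a.
  move=> hs g g' cE hT hT' hlt.
  have size_lt : (#|T :\ a| + #|T'| <= N)%N by move: hs; rewrite (cardsD1 a T) hT.
  have cE' : coverage (T :\ a) w =1 coverage T' (lower_weight w' a (w a)).
    by move=> k; rewrite coverage_lower_weight // -cE (coverageD1 _ _ hT); lra.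
  have [E _] :=
    IH _ _ _ _ size_lt (pos_admissibleD1 a g) (pos_admissible_lower_weight g' hlt) cE'.
  by move: hT'; rewrite -E in_setD1 eqxx.
have eq_a : alpha a = beta a.
  case: (ltgtP (alpha a) (beta a)) => // hlt; exfalso.
    exact: (weight_ltF _ _ _ _ hN g1 g2 covE ha1 ha2 hlt).
  by apply: (weight_ltF _ _ _ _ _ g2 g1 (fsym covE) ha2 ha1 hlt); rewrite addnC.
have [E W] : T1 :\ a = T2 :\ a /\ {in T1 :\ a, alpha =1 beta}.
  apply: (IH _ _ _ _ _ (pos_admissibleD1 a g1) (pos_admissibleD1 a g2)).
    move: hN; rewrite (cardsD1 a T1) (cardsD1 a T2) ha1 ha2.
    by rewrite !add1n addSn addnS ltnS => /ltnW.
  by move=> k; have := covE k; rewrite (coverageD1 _ _ ha1) (coverageD1 _ _ ha2) eq_a; lra.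
split; first by rewrite -(setD1K ha1) -(setD1K ha2) E.
by move=> x hx; have [-> // | xa] := eqVneq x a; rewrite W // in_setD1 xa.
Qed.

Lemma coverage_eq T1 T2 alpha beta : (0 < n)%N ->
  pos_admissible T1 alpha -> pos_admissible T2 beta ->
  \sum_(a in T1) alpha a *: eroot R a = \sum_(a in T2) beta a *: eroot R a ->
  coverage T1 alpha =1 coverage T2 beta.
Proof.
move=> n_gt0 [ad1 ar1 pos1] [ad2 ar2 pos2] hsum.
pose D k := coverage T1 alpha k - coverage T2 beta k.
have D_const : forall k j, D k = D j.
  apply: ord_pred_invariant_const => k; rewrite /D.
  by have := congr1 (fun v : 'rV[R]_n => v 0 k) hsum; rewrite !sum_eroot_coverage //; lra.
have [k1 /coverage_eq0 z1] := admissible_uncovered n_gt0 ad1 ar1.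
have [k2 /coverage_eq0 z2] := admissible_uncovered n_gt0 ad2 ar2.
move=> k; have := D_const k k1; have := D_const k2 k1; rewrite /D z1 z2.
by have := coverage_ge0 k2 pos1; have := coverage_ge0 k1 pos2; lra.
Qed.

End Coverage.
End Arcs.

Local Open Scope ring_scope.

Theorem mainTheorem6 (R : realFieldType) (n : nat) (hn : (3 <= n)%N)
  (T1 T2 : {set garc n}) (alpha beta : garc n -> R) :
  simplexK T1 -> simplexK T2 ->
  (forall a, a \in T1 -> 0 < alpha a) ->
  (forall a, a \in T2 -> 0 < beta a) ->
  \sum_(a in T1) alpha a = 1 -> \sum_(a in T2) beta a = 1 ->
  \sum_(a in T1) alpha a *: eroot R a = \sum_(a in T2) beta a *: eroot R a ->
  T1 = T2 /\ (forall a, a \in T1 -> alpha a = beta a).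
Proof.
move=> /and3P [_ /forall_inP ar1 ad1] /and3P [_ /forall_inP ar2 ad2] pos1 pos2 _ _ hsum.
have g1 : pos_admissible T1 alpha by [].
have g2 : pos_admissible T2 beta by [].
have n_gt0 : (0 < n)%N by apply: leq_trans hn.
exact: coverage_inj_size (leqnn _) g1 g2 (coverage_eq n_gt0 g1 g2 hsum).
Qed.
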